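(* Let $d\ge2$, $\varepsilon\ge1$, $s=\lceil d/(1+e^\varepsilon)\rceil$. Let $q^{\mathrm{ss}}$ be the $\varepsilon$-LDP $\texttt{Subset Selection}$ mechanism with estimator $\hat{\mathbf{x}}^{\mathrm{ss}}=(\mathbf{z}-b_{\mathrm{ss}}\mathbf{1})/m_{\mathrm{ss}}$, and let $q^{\mathrm{mmrc}}$ be the MMRC mechanism simulating it with $N$ candidates and estimator $\hat{\mathbf{x}}^{\mathrm{mmrc}}=(\mathbf{z}_K-b_{\mathrm{mmrc}}\mathbf{1})/m_{\mathrm{mmrc}}$. Let $\lambda>0$. If \[ N\ge\frac{2(e^\varepsilon+1)^2(1+\lambda)^2}{0.24^2\lambda^2}\ln\Big(\frac{8(1+\lambda)}{0.24\lambda}\Big), \] then for every $\mathbf{x}\in\{e_1,\dots,e_d\}$, \[ \mathbb{E}_{q^{\mathrm{mmrc}}}\big[\|\hat{\mathbf{x}}^{\mathrm{mmrc}}-\mathbf{x}\|_2^2\big]\le(1+4\lambda+5\lambda^2+2\lambda^3)\,\mathbb{E}_{q^{\mathrm{ss}}}\big[\|\hat{\mathbf{x}}^{\mathrm{ss}}-\mathbf{x}\|_2^2\big]. \]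
   Context: $\texttt{Subset Selection}$: inputs $\{e_1,\dots,e_d\}$; outputs $\mathcal{Z}=\{\mathbf{z}\in\{0,1\}^d:\sum_iz_i=s\}$; for $\mathbf{x}=e_j$, $\mathsf{Cap}_{\mathbf{x}}=\{\mathbf{z}\in\mathcal{Z}:z_j=1\}$; $q^{\mathrm{ss}}(\mathbf{z}\mid\mathbf{x})=c_1=\frac{e^\varepsilon}{\binom{d-1}{s-1}e^\varepsilon+\binom{d-1}{s}}$ on $\mathsf{Cap}_{\mathbf{x}}$ and $c_2=\frac{1}{\binom{d-1}{s-1}e^\varepsilon+\binom{d-1}{s}}$ otherwise; $m_{\mathrm{ss}}=\frac{s(d-s)(e^\varepsilon-1)}{(d-1)(s(e^\varepsilon-1)+d)}$, $b_{\mathrm{ss}}=\frac{s((s-1)e^\varepsilon+(d-s))}{(d-1)(s(e^\varepsilon-1)+d)}$; $\mathbf{1}$ is the all-ones vector. Let $\bar\theta=s/d$. MMRC: draw $\mathbf{z}_1,\dots,\mathbf{z}_N$ i.i.d. uniform on $\mathcal{Z}$; $\theta$ = fraction of candidates in $\mathsf{Cap}_{\mathbf{x}}$; $\pi^{\mathrm{mrc}}(k)=\frac1N\frac{c_i}{\theta c_1+(1-\theta)c_2}$ ($i=1$ cap, $i=2$ otherwise); $t_u=\frac1N\frac{c_1}{\bar\theta c_1+(1-\bar\theta)c_2}$, $t_l=\frac1N\frac{c_2}{\bar\theta c_1+(1-\bar\theta)c_2}$; $\pi^{\mathrm{mmrc}}=\pi^{\mathrm{mrc}}$ if $\theta=\bar\theta$;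 if $\theta<\bar\theta$, $t_u$ on cap candidates and $\frac{1-N\theta t_u}{N(1-\theta)}$ on others; if $\theta>\bar\theta$, $t_l$ on non-cap candidates and $\frac{1-N(1-\theta)t_l}{N\theta}$ on cap ones; $K\sim\pi^{\mathrm{mmrc}}$. With $N\theta\sim\mathrm{Binom}(N,s/d)$, $G=\mathbb{E}_\theta\big[\frac{e^\varepsilon\theta}{e^\varepsilon\bar\theta+1-\bar\theta}\mathbf{1}(\theta\le\bar\theta)+\frac{e^\varepsilon\bar\theta+\theta-\bar\theta}{e^\varepsilon\bar\theta+1-\bar\theta}\mathbf{1}(\theta>\bar\theta)\big]$, $m_{\mathrm{mmrc}}=\frac{d}{d-1}G-\frac{s}{d-1}$, $b_{\mathrm{mmrc}}=\frac{s-G}{d-1}$. Expectations under $q^{\mathrm{mmrc}}$ are over the candidates and $K$. *)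

From HB Require Import structures.
From mathcomp Require Import all_boot all_order all_algebra.
From mathcomp Require Import all_classical all_reals all_analysis.
Set Implicit Arguments. Unset Strict Implicit. Unset Printing Implicit Defensive.
Import Order.TTheory GRing.Theory Num.Theory.
Local Open Scope ring_scope.

Section SubsetSelection.
Variables (R : realType) (d : nat) (eps : R).

(* s = ceil (d / (1 + e^eps)), as a natural number (it is positive). *)
Definition ss_s : nat := `|Num.ceil (d%:R / (1 + expR eps))|%N.

Variable s : nat.

Definition ss_den : R := 'C(d.-1, s.-1)%:R * expR eps + 'C(d.-1, s)%:R.
Definition c1 : R := expR eps / ss_den.
Definition c2 : R := 1 / ss_den.

(* output space Z : subsets z of 'I_d (z_i = 1 iff i \in z) with #|z| = s *)
Definition Zset : {set {set 'I_d}} := [set z : {set 'I_d} | #|z| == s].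

Definition q_ss (j : 'I_d) (z : {set 'I_d}) : R := if j \in z then c1 else c2.

Definition m_ss : R :=
  (s%:R * (d%:R - s%:R) * (expR eps - 1)) /
  ((d%:R - 1) * (s%:R * (expR eps - 1) + d%:R)).
Definition b_ss : R :=
  (s%:R * ((s%:R - 1) * expR eps + (d%:R - s%:R))) /
  ((d%:R - 1) * (s%:R * (expR eps - 1) + d%:R)).

Definition est (m b : R) (z : {set 'I_d}) (i : 'I_d) : R :=
  ((i \in z)%:R - b) / m.

Definition sqerr (m b : R) (z : {set 'I_d}) (j : 'I_d) : R :=
  \sum_(i < d) (est m b z i - (i == j)%:R) ^+ 2.

Definition E_ss (j : 'I_d) : R :=
  \sum_(z in Zset) q_ss j z * sqerr m_ss b_ss z j.

Variable N : nat.

Definition thbar : R := s%:R / d%:R.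

Definition theta (zs : {ffun 'I_N -> {set 'I_d}}) (j : 'I_d) : R :=
  #|[set k : 'I_N | j \in zs k]|%:R / N%:R.

Definition pi_mrc (zs : {ffun 'I_N -> {set 'I_d}}) (j : 'I_d) (k : 'I_N) : R :=
  let th := theta zs j in
  (if j \in zs k then c1 else c2) / (th * c1 + (1 - th) * c2) / N%:R.

Definition t_u : R := c1 / (thbar * c1 + (1 - thbar) * c2) / N%:R.
Definition t_l : R := c2 / (thbar * c1 + (1 - thbar) * c2) / N%:R.

Definition pi_mmrc (zs : {ffun 'I_N -> {set 'I_d}}) (j : 'I_d) (k : 'I_N) : R :=
  let th := theta zs j in
  if th == thbar then pi_mrc zs j k
  else if th < thbar then
    (if j \in zs k then t_u else (1 - N%:R * th * t_u) / (N%:R * (1 - th)))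
  else
    (if j \in zs k then (1 - N%:R * (1 - th) * t_l) / (N%:R * th) else t_l).

(* G = E_theta[...] with N theta ~ Binom(N, s/d) *)
Definition G_fun (th : R) : R :=
  if th <= thbar then expR eps * th / (expR eps * thbar + 1 - thbar)
  else (expR eps * thbar + th - thbar) / (expR eps * thbar + 1 - thbar).

Definition G_mmrc : R :=
  \sum_(k < N.+1) 'C(N, k)%:R * thbar ^+ k * (1 - thbar) ^+ (N - k)
                   * G_fun (k%:R / N%:R).

Definition m_mmrc : R := d%:R / (d%:R - 1) * G_mmrc - s%:R / (d%:R - 1).
Definition b_mmrc : R := (s%:R - G_mmrc) / (d%:R - 1).

(* E_{q^mmrc}[ || xhat^mmrc - e_j ||^2 ]: candidates i.i.d. uniform on Z,
   then K ~ pi^mmrc *)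
Definition E_mmrc (j : 'I_d) : R :=
  \sum_(zs : {ffun 'I_N -> {set 'I_d}} | [forall k, zs k \in Zset])
     (1 / (#|Zset|%:R ^+ N)) *
     \sum_(k < N) pi_mmrc zs j k * sqerr m_mmrc b_mmrc (zs k) j.

End SubsetSelection.

From mathcomp Require Import all_boot all_order all_algebra.
From mathcomp Require Import all_classical all_reals all_analysis.
From mathcomp Require Import ring lra zify.
Set Implicit Arguments. Unset Strict Implicit. Unset Printing Implicit Defensive.
Import Order.TTheory GRing.Theory Num.Theory.
Local Open Scope ring_scope.

(* For an output z of size s, the squared error of (z - b 1)/m depends only on whether z
   contains the true coordinate, so a mechanism's risk is determined by the probability G
   that its output hits the cap, and debiasing with (m, b) computed from G turns the risk
   into the explicit function debiased_mse G.  Subset selection has G = G_ss e p with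
   e = exp eps and p = s/d.  For MMRC the number of cap candidates is Binomial(N, p) and
   G_mmrc = E[G_fun theta], where the piecewise-linear G_fun equals G_ss e p at theta = p;
   a quadratic minorant of G_fun (AM-GM) gives G_mmrc >= G_ss e p - (e - 1) t / (2 (e p + 1 - p))
   as soon as Var theta = p (1 - p) / N <= t^2, which the sample-size hypothesis ensures for
   t = lam / ((1 + lam) 10 (e + 1)).  As s = ceil (d / (1 + e)) keeps p (1 - p) >= 1 / (20 (e + 1)),
   this loss is a fraction at most lam / (1 + lam) of the gap d G_ss - s, and such a
   perturbation of G raises debiased_mse by a factor at most (1 + lam)^2 (1 + 2 lam). *)

Lemma sum_if_card (R : pzSemiRingType) (T : finType) (P : pred T) (a b : R) :
  \sum_(i : T) (if P i then a else b) =
  #|[set i | P i]|%:R * a + #|[set i | ~~ P i]|%:R * b.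
Proof.
rewrite (bigID P) /= (eq_bigr (fun=> a)) => [|i ->//].
rewrite [X in _ + X](eq_bigr (fun=> b)) => [|i /negbTE ->//].
by rewrite !sumr_const !mulr_natl; congr (_ *+ _ + _ *+ _); apply: eq_card => i; rewrite inE.
Qed.

Lemma sumr_indicator (R : pzSemiRingType) (T : finType) (A : {pred T}) :
  \sum_(i : T) (i \in A)%:R = #|A|%:R :> R.
Proof.
rewrite -natr_sum -sum1_card [in RHS]big_mkcond /=.
by congr _%:R; apply: eq_bigr => i _; case: (i \in A).
Qed.

Section BinomialMoments.
Variable R : realFieldType.

Definition binom_pmf (N k : nat) (p : R) : R :=
  'C(N, k)%:R * p ^+ k * (1 - p) ^+ (N - k).

Lemma binom_pmf_ge0 N k p : 0 <= p <= 1 -> 0 <= binom_pmf N k p.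
Proof.
by case/andP=> p_ge0 p_le1; rewrite !mulr_ge0 ?exprn_ge0 ?subr_ge0.
Qed.

Lemma sum_binom_pmf N p : \sum_(k < N.+1) binom_pmf N k p = 1.
Proof.
rewrite -(expr1n _ N) -(subrK p 1) exprDn.
by apply: eq_bigr => k _; rewrite /binom_pmf -mulr_natl; ring.
Qed.

Lemma sum_nat_binom_pmf N p (f : nat -> R) :
  \sum_(k < N.+2) k%:R * binom_pmf N.+1 k p * f k =
  N.+1%:R * p * \sum_(k < N.+1) binom_pmf N k p * f k.+1.
Proof.
rewrite big_ord_recl /= !mul0r add0r big_distrr /=.
apply: eq_bigr => k _; rewrite /binom_pmf /bump /= add1n subSS exprS.
have binE : k.+1%:R * 'C(N.+1, k.+1)%:R = N.+1%:R * 'C(N, k)%:R :> R.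
  by rewrite -!natrM mul_bin_diag.
by rewrite !mulrA binE; ring.
Qed.

Lemma binom_mean N p : \sum_(k < N.+1) k%:R * binom_pmf N k p = N%:R * p.
Proof.
case: N => [|N]; first by rewrite big_ord1 !mul0r.
have := sum_nat_binom_pmf N p (fun=> 1).
under eq_bigr do rewrite mulr1; move=> ->.
by under eq_bigr do rewrite mulr1; rewrite sum_binom_pmf mulr1.
Qed.

Lemma binom_second_moment N p :
  \sum_(k < N.+1) k%:R ^+ 2 * binom_pmf N k p =
  N%:R * p + N%:R * (N%:R - 1) * p ^+ 2.
Proof.
case: N => [|N]; first by rewrite big_ord1 !mul0r expr0n /= mul0r add0r.
transitivity (\sum_(k < N.+2) k%:R * binom_pmf N.+1 k p * (fun k => k%:R) k).
  by apply: eq_bigr => k _; rewrite /=; ring.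
rewrite sum_nat_binom_pmf.
under eq_bigr do rewrite -natr1 mulrDr mulr1 mulrC.
by rewrite big_split /= sum_binom_pmf binom_mean -natr1; ring.
Qed.

Lemma binom_quadratic_moment N p (a b c : R) :
  \sum_(k < N.+1) binom_pmf N k p * (a + b * k%:R + c * k%:R ^+ 2) =
  a + b * (N%:R * p) + c * (N%:R * p + N%:R * (N%:R - 1) * p ^+ 2).
Proof.
rewrite -binom_second_moment -binom_mean -[a in RHS]mulr1 -(sum_binom_pmf N p).
by rewrite !big_distrr -!big_split /=; apply: eq_bigr => k _; ring.
Qed.

Lemma binom_centered_moment N p (a b c : R) : (0 < N)%N ->
  \sum_(k < N.+1) binom_pmf N k p *
    (a + b * (p - k%:R / N%:R) + c * (p - k%:R / N%:R) ^+ 2) =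
  a + c * (p * (1 - p) / N%:R).
Proof.
move=> N_gt0; have N_neq0 : N%:R != 0 :> R by rewrite pnatr_eq0 -lt0n.
transitivity (\sum_(k < N.+1) binom_pmf N k p * ((a + b * p + c * p ^+ 2)
   + (- b / N%:R - 2 * c * p / N%:R) * k%:R + (c / N%:R ^+ 2) * k%:R ^+ 2)).
  by apply: eq_bigr => k _; congr (_ * _); field.
by rewrite binom_quadratic_moment; field.
Qed.

End BinomialMoments.

Section CountingHits.
Variables (T : finType) (N : nat) (Z : {set T}) (P : pred T).

Lemma card_ffun_hits (S : {set 'I_N}) :
  #|[pred zs : {ffun 'I_N -> T} | [forall k, zs k \in Z] & [set k | P (zs k)] == S]| =
  (#|[set z in Z | P z]| ^ #|S| * #|[set z in Z | ~~ P z]| ^ (N - #|S|))%N.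
Proof.
pose F k := [pred z | (z \in Z) && (P z == (k \in S))].
transitivity #|(family F : simpl_pred {ffun 'I_N -> T})|.
  apply: eq_card => zs; rewrite !inE; apply/andP/familyP.
    by case=> /forallP zsZ /eqP hitsE k; rewrite inE zsZ -hitsE inE eqxx.
  move=> zsF; split; first by apply/forallP => k; case/andP: (zsF k).
  by apply/eqP/setP => k; rewrite inE; case/andP: (zsF k) => _ /eqP.
rewrite card_family foldrE big_image /= (bigID (mem S)) /=.
rewrite (eq_bigr (fun=> #|[set z in Z | P z]|)) => [|k kS]; last first.
  by apply: eq_card => z; rewrite !inE -topredE /= kS eqb_id.
rewrite [X in (_ * X)%N](eq_bigr (fun=> #|[set z in Z | ~~ P z]|)) => [|k kS].
  rewrite !prod_nat_const [X in (_ * _ ^ X)%N](_ : _ = #|~: S|).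
    congr (_ * _ ^ _)%N; have := cardsC S; rewrite card_ord => cardSC.
    by rewrite -[X in (X - _)%N]cardSC addKn.
  by apply: eq_card => i; rewrite inE.
by apply: eq_card => z; rewrite !inE -topredE /= (negbTE kS) eqbF_neg.
Qed.

Lemma sum_ffun_hits (V : nmodType) (f : nat -> V) :
  \sum_(zs : {ffun 'I_N -> T} | [forall k, zs k \in Z]) f #|[set k | P (zs k)]| =
  \sum_(k < N.+1) f k *+ ('C(N, k) * #|[set z in Z | P z]| ^ k
                             * #|[set z in Z | ~~ P z]| ^ (N - k)).
Proof.
have card_lt (S : {set 'I_N}) : (#|S| < N.+1)%N.
  by rewrite ltnS -[leqRHS]card_ord max_card.
rewrite (partition_big (fun zs : {ffun 'I_N -> T} => [set k | P (zs k)]) predT) //=.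
rewrite (partition_big (fun S => Ordinal (card_lt S)) predT) //=.
apply: eq_bigr => k _; rewrite -mulnA mulnC mulrnA.
set c := f k *+ (_ * _).
transitivity (\sum_(S : {set 'I_N} | #|S| == k) c).
  apply: eq_big => [S | S /eqP/(congr1 val)/= cardS]; first by rewrite -val_eqE.
  rewrite (eq_bigr (fun=> f k)) => [|zs /andP[_ /eqP ->]]; last by rewrite cardS.
  by rewrite sumr_const card_ffun_hits cardS.
rewrite sumr_const; congr (_ *+ _).
rewrite -[X in 'C(X, _)](card_ord N) -card_draws.
by apply: eq_card => S; rewrite inE.
Qed.

End CountingHits.

Lemma binom_pmf_ratio (R : realFieldType) (N k a b : nat) :
  (k <= N)%N -> (0 < a + b)%N ->
  ('C(N, k) * a ^ k * b ^ (N - k))%:R / (a + b)%:R ^+ N =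
  binom_pmf N k (a%:R / (a + b)%:R : R).
Proof.
move=> k_le_N ab_gt0; have ab_neq0 : (a + b)%:R != 0 :> R by rewrite pnatr_eq0 -lt0n.
rewrite /binom_pmf (_ : 1 - _ = b%:R / (a + b)%:R); last by rewrite natrD; field; rewrite -natrD.
rewrite !expr_div_n -[X in _ / _ ^+ X](subnKC k_le_N) exprD !natrM !natrX.
by field; rewrite !expf_neq0.
Qed.

Definition sqerr_miss (R : realFieldType) (d s : nat) (m b : R) : R :=
  (s%:R * (1 - 2 * b) + d%:R * b ^+ 2) * m^-1 ^+ 2 + 2 * b * m^-1 + 1.

Section SquaredError.
Variables (R : realType) (d s : nat).

Lemma sqerrE (m b : R) (z : {set 'I_d}) (j : 'I_d) : #|z| = s ->
  sqerr m b z j = sqerr_miss d s m b - 2 * m^-1 * (j \in z)%:R.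
Proof.
move=> card_z; rewrite /sqerr /est.
transitivity (\sum_(i < d) ((i \in z)%:R * ((1 - 2 * b) * m^-1 ^+ 2)
   + b ^+ 2 * m^-1 ^+ 2 + (i == j)%:R * (1 - 2 * ((j \in z)%:R - b) * m^-1))).
  apply: eq_bigr => i _; have [->|_] := eqVneq i j.
    by case: (j \in z) => /=; ring.
  by case: (i \in z) => /=; ring.
rewrite !big_split /= -!big_distrl /= sumr_indicator card_z sumr_const card_ord.
rewrite (bigD1 j) //= eqxx big1 => [|i /negbTE ->//].
by rewrite /sqerr_miss /=; ring.
Qed.

Lemma expected_sqerr (I : finType) (P : pred I) (w : I -> R)
    (z : I -> {set 'I_d}) (m b : R) (j : 'I_d) :
  \sum_(i | P i) w i = 1 -> (forall i, P i -> #|z i| = s) ->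
  \sum_(i | P i) w i * sqerr m b (z i) j =
  sqerr_miss d s m b - 2 * m^-1 * \sum_(i | P i) w i * (j \in z i)%:R.
Proof.
move=> w_sum1 card_z.
rewrite (eq_bigr (fun i => sqerr_miss d s m b * w i - 2 * m^-1 * (w i * (j \in z i)%:R))).
  by rewrite big_split /= sumrN -!big_distrr /= w_sum1 mulr1.
by move=> i Pi; rewrite sqerrE ?card_z //; ring.
Qed.

End SquaredError.

Definition G_ss (R : realFieldType) (e p : R) : R := e * p / (e * p + 1 - p).

(* If the output hits the true coordinate with probability G and each other coordinate with
   probability (s - G) / (d - 1), then E[z] = m x + b 1 for m = debias_m d s G and
   b = debias_b d s G; the paper's m_ss, b_ss, m_mmrc and b_mmrc are of this form. *)
Definition debias_m (R : realFieldType) (d s : nat) (G : R) : R :=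
  d%:R / (d%:R - 1) * G - s%:R / (d%:R - 1).

Definition debias_b (R : realFieldType) (d s : nat) (G : R) : R :=
  (s%:R - G) / (d%:R - 1).

Section DebiasedRisk.
Variables (R : realFieldType) (d s : R).

Definition mse_num (G : R) : R := (d - 1) * (s - G ^+ 2) - (s - G) ^+ 2.
Definition debiased_mse (G : R) : R := (d - 1) * mse_num G / (d * G - s) ^+ 2.

Lemma perturbed_gap_ge (lam Gs G dl : R) : 0 <= lam -> 0 < d -> Gs - dl <= G ->
  (1 + lam) * (d * dl) <= lam * (d * Gs - s) ->
  d * Gs - s <= (1 + lam) * (d * G - s).
Proof.
move=> lam_ge0 d_gt0 G_ge dl_small.
have : d * (Gs - G) <= d * dl by rewrite ler_pM2l //; lra.
by move/(ler_wpM2l (_ : 0 <= 1 + lam)) => /(_ ltac:(lra)); nra.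
Qed.

Lemma debiased_mse_le (lam Gs G dl : R) :
  1 < d -> 0 < lam -> 0 < d * Gs - s -> 0 <= dl -> Gs - dl <= G ->
  (1 + lam) * (d * dl) <= lam * (d * Gs - s) ->
  (d * Gs - s) * dl <= lam * mse_num Gs -> 0 <= mse_num Gs ->
  debiased_mse G <= (1 + lam) ^+ 2 * (1 + 2 * lam) * debiased_mse Gs.
Proof.
move=> d_gt1 lam_gt0 us_gt0 dl_ge0 G_ge dl_small num_dl num_ge0.
have gap := perturbed_gap_ge (ltW lam_gt0) (lt_trans ltr01 d_gt1) G_ge dl_small.
rewrite /debiased_mse.
set us := d * Gs - s in us_gt0 dl_small num_dl gap *; set u := d * G - s in gap *.
have u_gt0 : 0 < u by nra.
have num_le : mse_num G <= (1 + 2 * lam) * mse_num Gs.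
  have -> : mse_num G = mse_num Gs + 2 * us * (Gs - G) - d * (Gs - G) ^+ 2.
    by rewrite /mse_num /us; ring.
  have : us * (Gs - G) <= us * dl by rewrite ler_pM2l //; lra.
  have : 0 <= d * (Gs - G) ^+ 2 by rewrite mulr_ge0 ?sqr_ge0 //; lra.
  lra.
have inv_le : (u ^+ 2)^-1 <= (1 + lam) ^+ 2 * (us ^+ 2)^-1.
  rewrite -[_ * _^-1]/((1 + lam) ^+ 2 / us ^+ 2) ler_pdivlMr ?exprn_gt0 //.
  by rewrite mulrC ler_pdivrMr ?exprn_gt0 // -exprMn ler_sqr ?nnegrE //; nra.
have [num_le0|num_gt0] := lerP (mse_num G) 0.
  apply: (@le_trans _ _ 0).
    by rewrite -mulrA mulr_ge0_le0 ?mulr_le0_ge0 ?invr_ge0 ?sqr_ge0 //; lra.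
  by rewrite !mulr_ge0 ?invr_ge0 ?sqr_ge0 //; nra.
rewrite [X in _ <= X](_ : _ = (d - 1) * ((1 + 2 * lam) * mse_num Gs)
                               * ((1 + lam) ^+ 2 * (us ^+ 2)^-1)); last by ring.
by apply: ler_pM; rewrite ?ler_pM2l ?mulr_ge0 ?invr_ge0 ?sqr_ge0 //; lra.
Qed.

End DebiasedRisk.

Lemma sqerr_miss_debias (R : realFieldType) (d s : nat) (G : R) :
  (1 < d)%N -> d%:R * G - s%:R != 0 ->
  sqerr_miss d s (debias_m d s G) (debias_b d s G) - 2 * (debias_m d s G)^-1 * G =
  debiased_mse d%:R s%:R G.
Proof.
move=> d_gt1 gap_neq0; have d1_neq0 : d%:R - 1 != 0 :> R.
  by rewrite subr_eq0 pnatr_eq1 gtn_eqF.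
rewrite /debias_m /debias_b (_ : _ * G - _ = (d%:R * G - s%:R) / (d%:R - 1)); last by field.
by rewrite /sqerr_miss /debiased_mse /mse_num; field; rewrite d1_neq0 gap_neq0.
Qed.

Section SubsetSelectionGap.
Variables (R : realFieldType) (d s e p : R).
Local Notation D := (e * p + 1 - p).

Lemma gap_ss : s = d * p -> D != 0 ->
  d * G_ss e p - s = d * (e - 1) * (p * (1 - p)) / D.
Proof. by move=> -> D_neq0; rewrite /G_ss; field. Qed.

Lemma mse_num_ss_ge : 1 <= e -> 0 < p < 1 -> 1 <= s <= d - 1 ->
  (d - 1) * (e * (p * (1 - p)) / D ^+ 2) <= mse_num d s (G_ss e p).
Proof.
move=> e_ge1 /andP[p_gt0 p_lt1] /andP[s_ge1 s_le]; have D_gt0 : 0 < D by nra.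
have GE : G_ss e p * (1 - G_ss e p) = e * (p * (1 - p)) / D ^+ 2.
  by rewrite /G_ss; field; rewrite gt_eqF.
have G_ge0 : 0 <= G_ss e p by rewrite divr_ge0 //; nra.
have G_le1 : G_ss e p <= 1 by rewrite ler_pdivrMr // mul1r; lra.
rewrite -GE (_ : mse_num _ _ _ = (d - 1) * (G_ss e p * (1 - G_ss e p))
   + (s - G_ss e p) * (d - 1 - s + G_ss e p)); last by rewrite /mse_num; ring.
by rewrite lerDl mulr_ge0 //; lra.
Qed.

Lemma debiased_mse_perturb (lam t G : R) :
  2 <= d -> 1 <= s <= d - 1 -> s = d * p -> 1 < e -> 0 < lam -> 0 <= t ->
  (1 + lam) * t <= 2 * lam * (p * (1 - p)) ->
  d * (e - 1) ^+ 2 * t <= 2 * lam * (d - 1) * e ->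
  G_ss e p - (e - 1) * t / (2 * D) <= G ->
  0 < d * G - s /\
  debiased_mse d s G <= (1 + lam) ^+ 2 * (1 + 2 * lam) * debiased_mse d s (G_ss e p).
Proof.
move=> d_ge2 s_bnd sE e_gt1 lam_gt0 t_ge0 t_var t_num G_ge.
have p_bnd : 0 < p < 1.
  by move: s_bnd; rewrite sE => /andP[? ?]; apply/andP; split; nra.
have pq_gt0 : 0 < p * (1 - p) by case/andP: p_bnd => ? ?; nra.
have D_gt0 : 0 < D by case/andP: p_bnd => ? ?; nra.
have D_neq0 := lt0r_neq0 D_gt0.
have us := gap_ss sE D_neq0.
set dl := (e - 1) * t / (2 * D) in G_ge.
have K_gt0 : 0 < d * (e - 1) / D by rewrite divr_gt0 ?mulr_gt0 //; lra.
have us_gt0 : 0 < d * G_ss e p - s by rewrite us mulrAC mulr_gt0.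
have dl_ge0 : 0 <= dl by rewrite divr_ge0 ?mulr_ge0 //; lra.
have dl_small : (1 + lam) * (d * dl) <= lam * (d * G_ss e p - s).
  rewrite us (_ : _ * (d * dl) = d * (e - 1) / D * ((1 + lam) * t / 2)); last first.
    by rewrite /dl; field.
  rewrite (_ : lam * _ = d * (e - 1) / D * (lam * (p * (1 - p)))); last by field.
  by apply: ler_wpM2l; [exact: ltW | lra].
have num_ge := mse_num_ss_ge (ltW e_gt1) p_bnd s_bnd.
have pqD_gt0 : 0 < p * (1 - p) / D ^+ 2 by rewrite divr_gt0 ?exprn_gt0.
have d_gt0 : 0 < d by lra.
split; first by have := perturbed_gap_ge (ltW lam_gt0) d_gt0 G_ge dl_small; nra.
apply: (@debiased_mse_le _ d s lam (G_ss e p) G dl) => //; first lra; last first.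
  by apply: le_trans num_ge; rewrite mulr_ge0 ?divr_ge0 ?mulr_ge0 ?exprn_ge0 //; lra.
apply: (le_trans _ (ler_wpM2l (ltW lam_gt0) num_ge)).
rewrite us /dl (_ : _ * _ = p * (1 - p) / D ^+ 2 * (d * (e - 1) ^+ 2 * t / 2));
  last by field.
rewrite (_ : lam * _ = p * (1 - p) / D ^+ 2 * (lam * (d - 1) * e)); last by field.
by apply: ler_wpM2l; [exact: ltW | lra].
Qed.

End SubsetSelectionGap.

Section SubsetSelectionMechanism.
Variables (R : realType) (d s : nat) (eps : R).
Hypotheses (s_gt0 : (0 < s)%N) (s_lt_d : (s < d)%N).
Local Notation e := (expR eps).
Local Notation p := (thbar R d s).

Lemma bin_cap_split : 'C(d, s) = ('C(d.-1, s.-1) + 'C(d.-1, s))%N.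
Proof. by case: d s s_gt0 s_lt_d => [|d'] [|s'] //= _ _; rewrite binS addnC. Qed.

Lemma bin_cap_gt0 : (0 < 'C(d.-1, s.-1))%N.
Proof. by rewrite bin_gt0; lia. Qed.

Lemma ss_den_gt0 : 0 < ss_den d eps s.
Proof.
by rewrite /ss_den ltr_wpDr ?ler0n // mulr_gt0 ?expR_gt0 // ltr0n bin_cap_gt0.
Qed.

Lemma c1E : c1 d eps s = e * c2 d eps s.
Proof. by rewrite /c1 /c2 mulrA mulr1. Qed.

Lemma c2_gt0 : 0 < c2 d eps s.
Proof. by rewrite /c2 mul1r invr_gt0 ss_den_gt0. Qed.

Lemma thbar_gt0 : 0 < p.
Proof. by rewrite /thbar divr_gt0 ?ltr0n //; lia. Qed.

Lemma thbar_lt1 : p < 1.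
Proof. by rewrite /thbar ltr_pdivrMr ?ltr0n ?mul1r ?ltr_nat //; lia. Qed.

Lemma thbar_ge0_le1 : 0 <= p <= 1.
Proof. by rewrite (ltW thbar_gt0) (ltW thbar_lt1). Qed.

Lemma card_Zset_notin (j : 'I_d) :
  #|[set z in Zset d s | j \notin z]| = 'C(d.-1, s).
Proof.
rewrite -[X in 'C(X.-1, _)](card_ord d) -(cardsC1 j) -cards_draws.
apply: eq_card => z.
rewrite !inE andbC; congr (_ && _); apply/idP/fintype.subsetP => [jNz i iz | zNj].
  by rewrite in_setC1; apply: contraNneq jNz => <-.
by apply/negP => /zNj; rewrite in_setC1 eqxx.
Qed.

Lemma card_Zset_in (j : 'I_d) :
  #|[set z in Zset d s | j \in z]| = 'C(d.-1, s.-1).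
Proof.
have := cardsID [set z : {set 'I_d} | j \in z] (Zset d s).
rewrite [X in (_ + X)%N](_ : _ = #|[set z in Zset d s | j \notin z]|); last first.
  by apply: eq_card => z; rewrite !inE andbC.
rewrite card_Zset_notin /Zset card_draws card_ord bin_cap_split.
rewrite [X in (X + _)%N](_ : _ = #|[set z in Zset d s | j \in z]|) => [/addIn //|].
by apply: eq_card => z; rewrite !inE andbC.
Qed.

Lemma sum_Zset_cap (j : 'I_d) (F : {set 'I_d} -> R) (a b : R) :
  {in Zset d s, forall z, F z = if j \in z then a else b} ->
  \sum_(z in Zset d s) F z = 'C(d.-1, s.-1)%:R * a + 'C(d.-1, s)%:R * b.
Proof.
move=> FE; rewrite (bigID (fun z : {set 'I_d} => j \in z)) /=.
rewrite (eq_bigr (fun=> a)) => [|z /andP[/FE -> ->]//].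
rewrite [X in _ + X](eq_bigr (fun=> b)) => [|z /andP[/FE -> /negbTE ->]//].
rewrite !sumr_const -(card_Zset_in j) -(card_Zset_notin j) !mulr_natl.
by congr (_ *+ _ + _ *+ _); apply: eq_card => z; rewrite [RHS]inE.
Qed.

Lemma thbarE : 'C(d.-1, s.-1)%:R / 'C(d, s)%:R = p.
Proof.
have binE : (d * 'C(d.-1, s.-1) = s * 'C(d, s))%N.
  by case: d s s_gt0 s_lt_d => [|d'] [|s'] //= _ _; rewrite mul_bin_diag.
apply/eqP; rewrite /thbar eqr_div ?pnatr_eq0 -?lt0n ?bin_gt0 1?ltnW //; last lia.
by rewrite -!natrM mulnC binE mulnC.
Qed.

Lemma mix_den_gt0 : 0 < e * p + 1 - p.
Proof. by have := thbar_lt1; have := thbar_gt0; have := expR_gt0 eps; nra. Qed.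

Lemma sum_q_ss (j : 'I_d) : \sum_(z in Zset d s) q_ss eps s j z = 1.
Proof.
rewrite (sum_Zset_cap (j := j) (a := c1 d eps s) (b := c2 d eps s)) //.
have := ss_den_gt0; rewrite /c1 /c2 /ss_den => den_gt0.
by field; rewrite gt_eqF.
Qed.

Lemma sum_q_ss_cap (j : 'I_d) :
  \sum_(z in Zset d s) q_ss eps s j z * (j \in z)%:R = G_ss e p.
Proof.
rewrite (sum_Zset_cap (j := j) (a := c1 d eps s) (b := 0)) => [|z _]; last first.
  by rewrite /q_ss; case: (j \in z); rewrite ?mulr1 ?mulr0.
rewrite mulr0 addr0 -thbarE bin_cap_split /G_ss /c1 /ss_den natrD.
have := bin_cap_gt0; rewrite -(ltr0n R).
move: ('C(_, _)%:R) ('C(_, s)%:R) (expR_gt0 eps) (ler0n R 'C(d.-1, s)).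
move=> a b e_gt0 b_ge0 a_gt0.
by field; rewrite !gt_eqF //; nra.
Qed.

Lemma E_ssE (j : 'I_d) :
  E_ss eps s j = sqerr_miss d s (m_ss d eps s) (b_ss d eps s)
                 - 2 * (m_ss d eps s)^-1 * G_ss e p.
Proof.
rewrite /E_ss (expected_sqerr (s := s)) ?sum_q_ss ?sum_q_ss_cap //.
by move=> z /[1!inE] /eqP.
Qed.

Let sE : s%:R = d%:R * p.
Proof. by rewrite /thbar mulrC divfK // pnatr_eq0 -lt0n (leq_ltn_trans _ s_lt_d). Qed.

Lemma gap_ss_gt0 : 0 < eps -> 0 < d%:R * G_ss e p - s%:R.
Proof.
move=> eps_gt0.
have e_gt1 : 1 < e by rewrite -expR0 ltr_expR.
have p_gt0 := thbar_gt0; have p_lt1 := thbar_lt1; have D_gt0 := mix_den_gt0.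
have d_gt0 : 0 < d%:R :> R by rewrite ltr0n (leq_ltn_trans _ s_lt_d).
rewrite (gap_ss (e := e) sE (lt0r_neq0 D_gt0)); apply: divr_gt0 => //.
by apply: mulr_gt0; [apply: mulr_gt0 | apply: mulr_gt0]; lra.
Qed.

Lemma E_ss_mse (j : 'I_d) :
  0 < eps -> E_ss eps s j = debiased_mse d%:R s%:R (G_ss e p).
Proof.
move=> eps_gt0; have D_neq0 := lt0r_neq0 mix_den_gt0.
have d1_neq0 : d%:R - 1 != 0 :> R by rewrite subr_eq0 pnatr_eq1 gtn_eqF //; lia.
have q_neq0 : d%:R * p * (e - 1) + d%:R != 0 :> R.
  rewrite (_ : _ + _ = d%:R * (e * p + 1 - p)); last by ring.
  by rewrite mulf_neq0 // pnatr_eq0 gtn_eqF //; lia.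
rewrite E_ssE //.
have -> : m_ss d eps s = debias_m d s (G_ss e p).
  by rewrite /m_ss /debias_m /G_ss sE; field; rewrite d1_neq0 D_neq0 q_neq0.
have -> : b_ss d eps s = debias_b d s (G_ss e p).
  by rewrite /b_ss /debias_b /G_ss sE; field; rewrite d1_neq0 D_neq0 q_neq0.
by rewrite sqerr_miss_debias ?lt0r_neq0 ?gap_ss_gt0 //; lia.
Qed.

End SubsetSelectionMechanism.

Section MMRC.
Variables (R : realType) (d s : nat) (eps : R) (N : nat).
Hypotheses (s_gt0 : (0 < s)%N) (s_lt_d : (s < d)%N) (N_gt0 : (0 < N)%N).
Local Notation e := (expR eps).
Local Notation p := (thbar R d s).
Local Notation D := (expR eps * thbar R d s + 1 - thbar R d s).

Definition pi_cap (th : R) : R :=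
  if th == p then c1 d eps s / (th * c1 d eps s + (1 - th) * c2 d eps s) / N%:R
  else if th < p then t_u d eps s N
  else (1 - N%:R * (1 - th) * t_l d eps s N) / (N%:R * th).

Definition pi_out (th : R) : R :=
  if th == p then c2 d eps s / (th * c1 d eps s + (1 - th) * c2 d eps s) / N%:R
  else if th < p then (1 - N%:R * th * t_u d eps s N) / (N%:R * (1 - th))
  else t_l d eps s N.

Lemma pi_mmrcE (zs : {ffun 'I_N -> {set 'I_d}}) (j : 'I_d) (k : 'I_N) :
  pi_mmrc eps s zs j k =
  if j \in zs k then pi_cap (theta R zs j) else pi_out (theta R zs j).
Proof. by rewrite /pi_mmrc /pi_mrc; case: (j \in zs k). Qed.

Let N_neq0 : N%:R != 0 :> R. Proof. by rewrite pnatr_eq0 -lt0n. Qed.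

Lemma pi_mass (th : R) : 0 <= th <= 1 ->
  N%:R * th * pi_cap th = G_fun d eps s th /\
  N%:R * (1 - th) * pi_out th = 1 - G_fun d eps s th.
Proof.
case/andP=> th_ge0 th_le1.
have c_gt0 := c2_gt0 eps s_gt0 s_lt_d; have e_gt0 := expR_gt0 eps.
have p_gt0 := thbar_gt0 R s_gt0 s_lt_d; have p_lt1 := thbar_lt1 R s_gt0 s_lt_d.
have D_gt0 := mix_den_gt0 eps s_gt0 s_lt_d.
rewrite /pi_cap /pi_out /G_fun /t_u /t_l c1E; move: (c2 d eps s) c_gt0 => c c_gt0.
have cD_gt0 := mulr_gt0 c_gt0 D_gt0.
have [->|th_neq_p] := eqVneq th p.
  by rewrite lexx; split; field; rewrite N_neq0 !gt_eqF //; nra.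
case: ltgtP th_neq_p => // [th_lt_p|p_lt_th] _.
  by split; field; rewrite N_neq0 !gt_eqF //; nra.
by split; field; rewrite N_neq0 !gt_eqF //; nra.
Qed.

Lemma theta_card (zs : {ffun 'I_N -> {set 'I_d}}) (j : 'I_d) :
  #|[set k | j \in zs k]|%:R = N%:R * theta R zs j.
Proof. by rewrite /theta mulrC divfK. Qed.

Lemma theta_card_notin (zs : {ffun 'I_N -> {set 'I_d}}) (j : 'I_d) :
  #|[set k | j \notin zs k]|%:R = N%:R * (1 - theta R zs j).
Proof.
rewrite mulrBr mulr1 -theta_card -[X in _ = X%:R - _](card_ord N).
rewrite -(cardsC [set k | j \in zs k]) natrD addrAC subrr add0r.
by congr _%:R; apply: eq_card => k; rewrite !inE.
Qed.

Lemma theta_ge0_le1 (zs : {ffun 'I_N -> {set 'I_d}}) (j : 'I_d) :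
  0 <= theta R zs j <= 1.
Proof.
rewrite /theta divr_ge0 ?ler0n //= ler_pdivrMr ?ltr0n // mul1r ler_nat.
by rewrite -[leqRHS]card_ord max_card.
Qed.

Lemma sum_pi_mmrc (zs : {ffun 'I_N -> {set 'I_d}}) (j : 'I_d) :
  \sum_(k < N) pi_mmrc eps s zs j k = 1.
Proof.
under eq_bigr do rewrite pi_mmrcE.
have [cap out] := pi_mass (theta_ge0_le1 zs j).
by rewrite sum_if_card theta_card theta_card_notin cap out subrKC.
Qed.

Lemma sum_pi_mmrc_cap (zs : {ffun 'I_N -> {set 'I_d}}) (j : 'I_d) :
  \sum_(k < N) pi_mmrc eps s zs j k * (j \in zs k)%:R = G_fun d eps s (theta R zs j).
Proof.
rewrite (eq_bigr (fun k => if j \in zs k then pi_cap (theta R zs j) else 0)); last first.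
  by move=> k _; rewrite pi_mmrcE; case: (j \in zs k); rewrite ?mulr1 ?mulr0.
have [cap _] := pi_mass (theta_ge0_le1 zs j).
by rewrite sum_if_card theta_card cap mulr0 addr0.
Qed.

Lemma E_mmrcE (j : 'I_d) :
  E_mmrc eps s N j = sqerr_miss d s (m_mmrc d eps s N) (b_mmrc d eps s N)
                     - 2 * (m_mmrc d eps s N)^-1 * G_mmrc d eps s N.
Proof.
set risk := fun th => sqerr_miss d s (m_mmrc d eps s N) (b_mmrc d eps s N)
                      - 2 * (m_mmrc d eps s N)^-1 * G_fun d eps s th.
pose f n := risk (n%:R / N%:R) / #|Zset d s|%:R ^+ N.
transitivity (\sum_(zs : {ffun 'I_N -> {set 'I_d}} | [forall k, zs k \in Zset d s])
  f #|[set k | j \in zs k]|).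
  apply: eq_bigr => zs /forallP zsZ; rewrite (expected_sqerr (s := s)) => [||k _].
  - by rewrite sum_pi_mmrc_cap mulrC div1r.
  - exact: sum_pi_mmrc.
  - by have := zsZ k; rewrite inE => /eqP.
rewrite (sum_ffun_hits _ _ (fun z : {set 'I_d} => j \in z) f).
rewrite card_Zset_in // card_Zset_notin // /f /Zset card_draws card_ord bin_cap_split //.
transitivity (\sum_(k < N.+1) binom_pmf N k p * risk (k%:R / N%:R)).
  apply: eq_bigr => k _; rewrite -[_ *+ (_ * _)]mulr_natr mulrAC -mulrA mulrC.
  rewrite binom_pmf_ratio -?bin_cap_split ?thbarE //; first by rewrite -ltnS.
  by rewrite bin_gt0 ltnW.
rewrite /risk (eq_bigr (fun k : 'I_N.+1 =>
    sqerr_miss d s (m_mmrc d eps s N) (b_mmrc d eps s N) * binom_pmf N k p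
    - 2 * (m_mmrc d eps s N)^-1 * (binom_pmf N k p * G_fun d eps s (k%:R / N%:R)))).
  by rewrite sumrB -!big_distrr /= sum_binom_pmf mulr1.
by move=> k _; ring.
Qed.

(* AM-GM bounds (e - 1) (p - th) by (e - 1) (p - th + t)^2 / (4 t), so G_fun has a quadratic
   minorant in p - th whose binomial expectation only involves the variance of theta. *)
Lemma G_fun_ge (t th : R) : 0 <= eps -> 0 < t ->
  (e * p - (p - th) - (e - 1) * (p - th + t) ^+ 2 / (4 * t)) / D <= G_fun d eps s th.
Proof.
move=> eps_ge0 t_gt0; have e_ge1 : 1 <= e by rewrite -expR0 ler_expR.
have sq_ge0 : 0 <= (e - 1) * (p - th + t) ^+ 2 / (4 * t).
  by apply: divr_ge0; [apply: mulr_ge0; [lra | exact: sqr_ge0] | lra].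
have amgm : (e - 1) * (p - th) <= (e - 1) * (p - th + t) ^+ 2 / (4 * t).
  rewrite -subr_ge0 (_ : _ - _ = (e - 1) * (p - th - t) ^+ 2 / (4 * t)).
    by apply: divr_ge0; [apply: mulr_ge0; [lra | exact: sqr_ge0] | lra].
  by field; rewrite gt_eqF.
have D_gt0 := mix_den_gt0 eps s_gt0 s_lt_d.
by rewrite /G_fun; case: ifP => _; rewrite ler_pM2r ?invr_gt0 //; lra.
Qed.

Lemma G_mmrc_ge (t : R) : 0 <= eps -> 0 < t -> p * (1 - p) / N%:R <= t ^+ 2 ->
  G_ss e p - (e - 1) * t / (2 * D) <= G_mmrc d eps s N.
Proof.
move=> eps_ge0 t_gt0 var_le; have e_ge1 : 1 <= e by rewrite -expR0 ler_expR.
have p_bnd := thbar_ge0_le1 R s_gt0 s_lt_d.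
set a := (e * p - (e - 1) * t / 4) / D; set b := - (1 + (e - 1) / 2) / D.
set c := - ((e - 1) / (4 * t * D)).
have D_gt0 := mix_den_gt0 eps s_gt0 s_lt_d.
have c_le0 : c <= 0 by rewrite /c oppr_le0 divr_ge0 ?mulr_ge0 //; lra.
apply: (@le_trans _ _ (a + c * (p * (1 - p) / N%:R))).
  rewrite (_ : _ - _ = a + c * t ^+ 2); last by rewrite /a /c /G_ss; field; rewrite !gt_eqF.
  by rewrite lerD2l ler_wnM2l.
rewrite -(binom_centered_moment _ a b) //; apply: ler_sum => k _.
apply: ler_wpM2l; first exact: binom_pmf_ge0.
apply: le_trans (G_fun_ge _ eps_ge0 t_gt0).
by rewrite -subr_ge0 (_ : _ - _ = 0) // /a /b /c; field; rewrite N_neq0 !gt_eqF.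
Qed.

End MMRC.

Definition mmrc_tol (R : realFieldType) (e lam : R) : R :=
  lam / (1 + lam) / (10 * (e + 1)).

Lemma mmrc_tol_budget (R : realFieldType) (d e p lam : R) :
  2 <= d -> 1 <= e -> 0 < lam -> 1 / (20 * (e + 1)) <= p * (1 - p) ->
  [/\ 0 < mmrc_tol e lam, (1 + lam) * mmrc_tol e lam <= 2 * lam * (p * (1 - p))
    & d * (e - 1) ^+ 2 * mmrc_tol e lam <= 2 * lam * (d - 1) * e].
Proof.
move=> d_ge2 e_ge1 lam_gt0 pq_ge.
have tolE : mmrc_tol e lam * (1 + lam) = lam / (10 * (e + 1)).
  by rewrite /mmrc_tol; field; rewrite !gt_eqF //; lra.
have tol_gt0 : 0 < mmrc_tol e lam by rewrite !divr_gt0 //; lra.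
split => //.
  rewrite mulrC tolE (_ : lam / _ = 2 * lam * (1 / (20 * (e + 1)))).
    by rewrite ler_wpM2l //; lra.
  by field; rewrite gt_eqF //; lra.
have tol_le : mmrc_tol e lam <= lam / (10 * (e + 1)).
  by rewrite -tolE ler_peMr; lra.
apply: le_trans (ler_wpM2l _ tol_le) _; first by rewrite mulr_ge0 ?sqr_ge0 //; lra.
rewrite mulrA ler_pdivrMr; last lra.
have : d * (e - 1) ^+ 2 <= 20 * (d - 1) * e * (e + 1) by nra.
by move/(ler_wpM2l (ltW lam_gt0)); nra.
Qed.

Lemma ln_ge1_subV (R : realType) (x : R) : 0 < x -> 1 - x^-1 <= ln x.
Proof.
by move=> x_gt0; have := expR_ge1Dx (- ln x); rewrite expRN lnK ?posrE //; lra.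
Qed.

Lemma sample_size_var_le (R : realType) (N : nat) (e lam p : R) :
  0 <= e -> 0 < lam -> 0 <= p <= 1 ->
  2 * (e + 1) ^+ 2 * (1 + lam) ^+ 2 / ((6 / 25) ^+ 2 * lam ^+ 2)
    * ln (8 * (1 + lam) / ((6 / 25) * lam)) <= N%:R ->
  (0 < N)%N /\ p * (1 - p) / N%:R <= mmrc_tol e lam ^+ 2.
Proof.
move=> e_ge0 lam_gt0 /andP[p_ge0 p_le1] N_ge.
set x := 8 * (1 + lam) / ((6 / 25) * lam) in N_ge.
have x_ge : 100 / 3 <= x by rewrite ler_pdivlMr ?mulr_gt0 //; lra.
have ln_x : 97 / 100 <= ln x.
  have xV_le : x^-1 <= 3 / 100 by rewrite -[3 / 100]invf_div lef_pV2 ?posrE //; lra.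
  by have := ln_ge1_subV (lt_le_trans (_ : 0 < 100 / 3) x_ge); lra.
set K := (e + 1) ^+ 2 * (1 + lam) ^+ 2 / lam ^+ 2.
have K_gt0 : 0 < K by rewrite divr_gt0 ?mulr_gt0 ?exprn_gt0 //; lra.
rewrite (_ : 2 * _ * _ / _ = 1250 / 36 * K) in N_ge; last first.
  by rewrite /K; field; rewrite gt_eqF.
have N_ge' : 33 * K <= N%:R by nra.
have N_gt0 : 0 < N%:R :> R by nra.
split; first by rewrite -(ltr0n R).
have tolK : mmrc_tol e lam ^+ 2 * K = 1 / 100.
  by rewrite /mmrc_tol /K; field; rewrite !gt_eqF //; lra.
rewrite ler_pdivrMr //.
have : mmrc_tol e lam ^+ 2 * (33 * K) <= mmrc_tol e lam ^+ 2 * N%:R.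
  by rewrite ler_wpM2l ?sqr_ge0.
by nra.
Qed.

Lemma ss_s_bounds (R : realType) (d : nat) (eps : R) : (2 <= d)%N -> 1 <= eps ->
  [/\ (0 < ss_s d eps)%N, (ss_s d eps < d)%N &
      1 / (20 * (expR eps + 1)) <=
        thbar R d (ss_s d eps) * (1 - thbar R d (ss_s d eps))].
Proof.
move=> d_ge2 eps_ge1; set s := ss_s d eps; set x := d%:R / (1 + expR eps).
have e_ge2 : 2 <= expR eps by have := expR_ge1Dx eps; lra.
have d_ge2R : 2 <= d%:R :> R by rewrite ler_nat.
have x_gt0 : 0 < x by rewrite divr_gt0 //; lra.
have sE : s%:R = (Num.ceil x)%:~R :> R.
  by rewrite /s /ss_s -/x natr_absz ger0_norm // ceil_ge0; lra.
have x_le_s : x <= s%:R by rewrite sE ceil_ge.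
have s_lt : s%:R < x + 1 by have := ceilB1_lt x; rewrite intrB -sE /=; lra.
have x_le : x <= d%:R / 3.
  rewrite ler_pdivrMr; last lra.
  have : 0 <= d%:R * (expR eps - 2) by rewrite mulr_ge0 //; lra.
  lra.
have s_gt0 : (0 < s)%N by rewrite -(ltr0n R); lra.
have s_lt_d : (s < d)%N by rewrite -(ltr_nat R); lra.
split => //.
have p_ge : 1 / (1 + expR eps) <= thbar R d s.
  by rewrite /thbar ler_pdivlMr ?mul1r 1?mulrC //; lra.
have p_le : thbar R d s <= 5 / 6.
  rewrite /thbar ler_pdivrMr; lra.
rewrite (_ : 1 / _ = 1 / (1 + expR eps) * (1 / 20)).
  by rewrite ler_pM ?divr_ge0 //; lra.
by field; rewrite gt_eqF //; lra.
Qed.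

Lemma E_mmrc_le_E_ss (R : realType) (d s N : nat) (eps lam : R) (j : 'I_d) :
  (0 < s)%N -> (s < d)%N -> (0 < N)%N -> 0 < eps -> 0 < lam ->
  1 / (20 * (expR eps + 1)) <= thbar R d s * (1 - thbar R d s) ->
  thbar R d s * (1 - thbar R d s) / N%:R <= mmrc_tol (expR eps) lam ^+ 2 ->
  E_mmrc eps s N j <= (1 + lam) ^+ 2 * (1 + 2 * lam) * E_ss eps s j.
Proof.
move=> s_gt0 s_lt_d N_gt0 eps_gt0 lam_gt0 pq_ge var_le.
have e_gt1 : 1 < expR eps by rewrite -expR0 ltr_expR.
have d_gt1 : (1 < d)%N by lia.
have d_ge2 : 2 <= d%:R :> R by rewrite ler_nat.
have s_bnd : (1 <= s%:R :> R) && (s%:R <= d%:R - 1 :> R).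
  have : s%:R + 1 <= d%:R :> R by rewrite natr1 ler_nat.
  by move=> ?; apply/andP; split; [rewrite ler1n | lra].
have sE : s%:R = d%:R * thbar R d s by rewrite /thbar mulrC divfK // gt_eqF //; lra.
have [t_gt0 t_var t_num] := mmrc_tol_budget d_ge2 (ltW e_gt1) lam_gt0 pq_ge.
have G_ge := G_mmrc_ge s_gt0 s_lt_d N_gt0 (ltW eps_gt0) t_gt0 var_le.
have [gap_gt0 mse_le] :=
  debiased_mse_perturb d_ge2 s_bnd sE e_gt1 lam_gt0 (ltW t_gt0) t_var t_num G_ge.
by rewrite E_mmrcE // sqerr_miss_debias ?lt0r_neq0 // E_ss_mse.
Qed.

Theorem theorem7 (R : realType) (d N : nat) (eps lam : R) :
  (2 <= d)%N -> 1 <= eps -> 0 < lam ->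
  let s := ss_s d eps in
  2 * (expR eps + 1) ^+ 2 * (1 + lam) ^+ 2 / ((6 / 25) ^+ 2 * lam ^+ 2)
    * ln (8 * (1 + lam) / ((6 / 25) * lam)) <= N%:R ->
  forall j : 'I_d,
    E_mmrc eps s N j <=
      (1 + 4 * lam + 5 * lam ^+ 2 + 2 * lam ^+ 3) * E_ss eps s j.
Proof.
move=> d_ge2 eps_ge1 lam_gt0 s N_ge j.
have [s_gt0 s_lt_d pq_ge] := ss_s_bounds d_ge2 eps_ge1.
have p_bnd := thbar_ge0_le1 R s_gt0 s_lt_d.
have [N_gt0 var_le] := sample_size_var_le (ltW (expR_gt0 eps)) lam_gt0 p_bnd N_ge.
rewrite (_ : 1 + 4 * lam + _ + _ = (1 + lam) ^+ 2 * (1 + 2 * lam)); last by ring.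
by apply: E_mmrc_le_E_ss => //; lra.
Qed.
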